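(* Let $(F_S,\iota)$ be an embedded local étale algebra and let $\Gamma,\Gamma'\subseteq\mathrm{PGL}_2(F_S)$ be commensurable subgroups. Then $\mathcal L^S_{\Gamma'}=\mathcal L^S_\Gamma$.
   Context: Fix a prime $p$ and let $\mathbf{C}$ be the completion of an algebraic closure of $\mathbb{Q}_p$ or of $\mathbb{F}_p((T))$. An embedded local étale algebra $(F_S,\iota)$ consists of a finite non-empty set $S$, non-Archimedean local fields $F_\mathfrak p$ ($\mathfrak p\in S$) of residue characteristic $p$ and the same characteristic as $\mathbf C$, and embeddings $\iota_\mathfrak p\colon F_\mathfrak p\hookrightarrow\mathbf C$. $\mathrm{PGL}_2(F_S)=\prod_\mathfrak p\mathrm{PGL}_2(F_\mathfrak p)$ acts componentwise via $\iota$ by Möbius transformations on $\mathbb P^1(\mathbf C_S)=\prod_{\mathfrak p\in S}\mathbb P^1(\mathbf C)$. For a subgroup $\Gamma$, $\mathcal L^S_\Gamma$ is the set of $x\in\mathbb P^1(\mathbf C_S)$ such that $\gamma_j(y)\to x$ for some $y\in\mathbb P^1(\mathbf C_S)$ and pairwise distinct $\gamma_j\in\Gamma$. *)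

From HB Require Import structures.
From mathcomp Require Import all_boot all_order all_algebra.
From mathcomp Require Import reals.
Set Implicit Arguments. Unset Strict Implicit. Unset Printing Implicit Defensive.
Import Order.TTheory GRing.Theory Num.Theory.
Local Open Scope ring_scope.

Section Valued.
Variable R : realType.

Definition na_abs (K : fieldType) (v : K -> R) : Prop :=
  [/\ (forall x, 0 <= v x), (forall x, v x = 0 <-> x = 0),
      (forall x y, v (x * y) = v x * v y) &
      (forall x y, v (x + y) <= Num.max (v x) (v y))].

Definition cvg_v (K : fieldType) (v : K -> R) (u : nat -> K) (l : K) : Prop :=
  forall e : R, 0 < e -> exists N : nat, forall n, (N <= n)%N -> v (u n - l) < e.

Definition cauchy_v (K : fieldType) (v : K -> R) (u : nat -> K) : Prop :=
  forall e : R, 0 < e -> exists N : nat,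
    forall m n, (N <= m)%N -> (N <= n)%N -> v (u m - u n) < e.

Definition complete_v (K : fieldType) (v : K -> R) : Prop :=
  forall u, cauchy_v v u -> exists l, cvg_v v u l.

Definition closure_v (K : fieldType) (v : K -> R) (A : K -> Prop) (x : K) : Prop :=
  forall e : R, 0 < e -> exists a, A a /\ v (x - a) < e.

Definition dense_v (K : fieldType) (v : K -> R) (A : K -> Prop) : Prop :=
  forall x, closure_v v A x.

Definition algebraic_over (K : fieldType) (A : K -> Prop) (x : K) : Prop :=
  exists P : {poly K}, [/\ P != 0, (forall i, A P`_i) & root P x].

(** Non-Archimedean local field of residue characteristic p:
    complete, discretely and nontrivially valued, finite residue field,
    residue characteristic p. *)
Definition na_local_field (p : nat) (K : fieldType) (v : K -> R) : Prop :=
  [/\ na_abs v, complete_v v,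
      (exists pi : K, 0 < v pi < 1 /\
         forall x, x != 0 -> exists z : int, v x = v pi ^ z),
      (exists reps : seq K, forall x, v x <= 1 ->
         exists2 r, r \in reps & v (x - r) < 1) &
      v p%:R < 1].

(** C is (isometric to) the completion of an algebraic closure of Q_p or of
    F_p((T)): C is complete, algebraically closed (its type is a
    closedFieldType), and the elements algebraic over a closed subfield B are
    dense, where B is either the closure of the prime field Q (char 0, with
    |p| < 1, so B = Q_p by Ostrowski) or the closure of F_p(T) for some
    0 < |T| < 1 (char p, so B = F_p((T))). *)
Definition completed_alg_closure (p : nat) (C : closedFieldType) (v : C -> R)
  : Prop :=
  [/\ prime p, na_abs v, complete_v v, v p%:R < 1 &
   exists B : C -> Prop,
     ( ((forall q : nat, q \notin [pchar C]) /\
        B = closure_v v (fun x => exists r : rat, x = ratr r))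
     \/ (p \in [pchar C] /\ exists T : C, 0 < v T < 1 /\
          B = closure_v v (fun x => exists P Q : {poly C},
                [/\ (forall i, exists n : nat, P`_i = n%:R),
                    (forall i, exists n : nat, Q`_i = n%:R),
                    Q.[T] != 0 & x = P.[T] / Q.[T]])) )
     /\ dense_v v (algebraic_over B)].

Definition cont_emb (K L : fieldType) (vK : K -> R) (vL : L -> R) (f : K -> L)
  : Prop := forall u l, cvg_v vK u l -> cvg_v vL (fun n => f (u n)) (f l).

(** Points of P^1(C): None is the point at infinity.
    Chordal (spherical) metric of the non-Archimedean absolute value. *)
Definition chord (C : fieldType) (v : C -> R) (x y : option C) : R :=
  match x, y with
  | Some a, Some b => v (a - b) / (Num.max 1 (v a) * Num.max 1 (v b))
  | Some a, None => 1 / Num.max 1 (v a)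
  | None, Some b => 1 / Num.max 1 (v b)
  | None, None => 0
  end.

Definition mobius (C : fieldType) (a b c d : C) (z : option C) : option C :=
  match z with
  | None => if c == 0 then None else Some (a / c)
  | Some z => if c * z + d == 0 then None else Some ((a * z + b) / (c * z + d))
  end.

End Valued.

Section PGL.
Variables (S : finType) (F : S -> fieldType).

(** Elements of GL_2(F_S) (as families of matrices); an element of
    PGL_2(F_S) is represented by any of its lifts. *)
Definition GL2S := forall s : S, 'M[F s]_2.

Definition mulS (g h : GL2S) : GL2S := fun s => g s *m h s.
Definition invS (g : GL2S) : GL2S := fun s => invmx (g s).

Definition projeq (g h : GL2S) : Prop :=
  forall s, exists c : F s, c != 0 /\ g s = c *: h s.

(** A subgroup of PGL_2(F_S), represented by its full preimage in GL_2(F_S):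
    a subgroup of GL_2(F_S) containing the center (nonzero scalars). *)
Definition PGL2S_subgroup (G : GL2S -> Prop) : Prop :=
  [/\ (forall g, G g -> forall s, g s \in unitmx),
      (forall c : forall s, F s, (forall s, c s != 0) ->
          G (fun s => (c s)%:M)),
      (forall g h, G g -> G h -> G (mulS g h)) &
      (forall g, G g -> G (invS g))].

Definition finite_index (H G : GL2S -> Prop) : Prop :=
  exists (n : nat) (r : 'I_n -> GL2S),
    forall g, G g -> exists i : 'I_n, H (mulS (invS (r i)) g).

Definition commensurable (G G' : GL2S -> Prop) : Prop :=
  finite_index (fun g => G g /\ G' g) G /\ finite_index (fun g => G g /\ G' g) G'.

Variables (R : realType) (C : fieldType) (vC : C -> R)
  (iota : forall s, {rmorphism F s -> C}).

Definition actS (g : GL2S) (z : S -> option C) : S -> option C :=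
  fun s => mobius (iota s (g s ord0 ord0)) (iota s (g s ord0 ord_max))
                  (iota s (g s ord_max ord0)) (iota s (g s ord_max ord_max))
                  (z s).

Definition cvgP1S (u : nat -> S -> option C) (x : S -> option C) : Prop :=
  forall s, forall e : R, 0 < e -> exists N : nat,
    forall n, (N <= n)%N -> chord vC (u n s) (x s) < e.

Definition limit_set (G : GL2S -> Prop) (x : S -> option C) : Prop :=
  exists (y : S -> option C) (gam : nat -> GL2S),
    [/\ (forall j, G (gam j)),
        (forall i j, i <> j -> ~ projeq (gam i) (gam j)) &
        cvgP1S (fun j => actS (gam j) y) x].

End PGL.

(* A Moebius map is the projectivisation of a linear map of C^2, so the action
   of GL_2(F_S) on P^1(C_S) is a group action.  Let H be a subgroup of finite
   index in G.  Given pairwise distinct g_j in G with g_j y -> x, pigeonhole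
   yields a coset H r with g_j^-1 in r H for infinitely many j; along that
   subsequence h_k := g_(j_k) g_(j_0)^-1 lies in H, the h_k are pairwise
   distinct and h_k (g_(j_0) y) -> x.  Hence L_G = L_H, and commensurable
   groups have the same limit set as their intersection. *)

From HB Require Import structures.
From mathcomp Require Import all_boot all_order all_algebra ring.
From mathcomp Require Import reals boolp.
Set Implicit Arguments. Unset Strict Implicit. Unset Printing Implicit Defensive.
Import Order.TTheory GRing.Theory Num.Theory.
Local Open Scope ring_scope.

Section Projective.
Variable C : fieldType.

(* The point [u : w] of P^1(C); [u : 0] is infinity (meaningful for u != 0). *)
Definition proj_pt (u w : C) : option C := if w == 0 then None else Some (u / w).

Definition hom_pt (z : option C) : C * C := if z is Some z then (z, 1) else (1, 0).

Lemma hom_pt_neq0 z : hom_pt z != (0, 0).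
Proof. by case: z => [z|]; rewrite xpair_eqE ?oner_eq0 ?andbF. Qed.

Lemma proj_ptZ (u w t : C) : t != 0 -> proj_pt (t * u) (t * w) = proj_pt u w.
Proof.
move=> t_neq0; rewrite /proj_pt mulf_eq0 (negbTE t_neq0) /=.
by case: eqVneq => // w_neq0; congr Some; field; rewrite t_neq0 w_neq0.
Qed.

Lemma lin_pt_neq0 (a b c d u w : C) : a * d - b * c != 0 ->
  (u, w) != (0, 0) -> (a * u + b * w, c * u + d * w) != (0, 0).
Proof.
rewrite !xpair_eqE => det_neq0; apply: contra => /andP[/eqP e1 /eqP e2].
have det_u : (a * d - b * c) * u = d * (a * u + b * w) - b * (c * u + d * w).
  by ring.
have det_w : (a * d - b * c) * w = a * (c * u + d * w) - c * (a * u + b * w).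
  by ring.
rewrite e1 e2 !mulr0 subr0 in det_u det_w.
by move: det_u det_w => /eqP + /eqP; rewrite !mulf_eq0 (negbTE det_neq0) => /= -> ->.
Qed.

Lemma mobius_hom_pt (a b c d : C) z :
  mobius a b c d z = proj_pt (a * (hom_pt z).1 + b * (hom_pt z).2)
                             (c * (hom_pt z).1 + d * (hom_pt z).2).
Proof. by case: z => [z|] /=; rewrite ?mulr1 ?mulr0 ?addr0. Qed.

Lemma mobius_proj_pt (a b c d u w : C) : (u, w) != (0, 0) ->
  mobius a b c d (proj_pt u w) = proj_pt (a * u + b * w) (c * u + d * w).
Proof.
move=> uw_neq0; rewrite {1}/proj_pt; case: eqVneq => [w0 | w_neq0].
  have u_neq0 : u != 0 by apply: contraNneq uw_neq0 => u0; rewrite u0 w0.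
  by rewrite w0 !mulr0 !addr0 ![_ * u]mulrC proj_ptZ.
transitivity (proj_pt (a * (u / w) + b) (c * (u / w) + d)); first by [].
by rewrite -(proj_ptZ _ _ w_neq0); congr proj_pt; field.
Qed.

Lemma mobius_comp (a b c d a' b' c' d' : C) z : a * d - b * c != 0 ->
  mobius (a' * a + b' * c) (a' * b + b' * d) (c' * a + d' * c) (c' * b + d' * d) z
  = mobius a' b' c' d' (mobius a b c d z).
Proof.
move=> det_neq0; rewrite (mobius_hom_pt a b c d) mobius_hom_pt.
move: (hom_pt_neq0 z); case: (hom_pt z) => u w /= uw_neq0.
by rewrite mobius_proj_pt ?lin_pt_neq0 //; congr proj_pt; ring.
Qed.

Definition mobius_mx (A : 'M[C]_2) : option C -> option C :=
  mobius (A ord0 ord0) (A ord0 ord_max) (A ord_max ord0) (A ord_max ord_max).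

Lemma det_mx2 (A : 'M[C]_2) :
  \det A = A ord0 ord0 * A ord_max ord_max - A ord0 ord_max * A ord_max ord0.
Proof.
rewrite (expand_det_row _ ord0) !big_ord_recl big_ord0 /cofactor !det_mx11 !mxE /=.
have -> : lift ord0 (ord0 : 'I_1) = ord_max :> 'I_2 by exact: val_inj.
have -> : lift ord_max (ord0 : 'I_1) = ord0 :> 'I_2 by exact: val_inj.
by rewrite addr0 expr0 expr1 !mul1r mulN1r mulrN.
Qed.

Lemma mulmx2E (A B : 'M[C]_2) i j :
  (A *m B) i j = A i ord0 * B ord0 j + A i ord_max * B ord_max j.
Proof.
rewrite !mxE !big_ord_recl big_ord0 addr0.
by have -> : lift ord0 (ord0 : 'I_1) = ord_max :> 'I_2 by exact: val_inj.
Qed.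

Lemma mobius_mxM (A B : 'M[C]_2) z :
  B \in unitmx -> mobius_mx (A *m B) z = mobius_mx A (mobius_mx B z).
Proof.
rewrite unitmxE unitfE det_mx2 => det_neq0.
by rewrite /mobius_mx !mulmx2E mobius_comp.
Qed.

End Projective.

Lemma infinitely_often_ord n (f : nat -> 'I_n) :
  exists i, forall N, exists2 j, (N <= j)%N & f j = i.
Proof.
apply: contrapT => /forallNP never.
have /boolp.choice[N N_P] : forall i, exists N, forall j, (N <= j)%N -> f j != i.
  move=> i; have /existsNP[N N_P] := never i.
  by exists N => j N_j; apply/eqP => fj; apply: N_P; exists j.
pose M := \max_(i < n) N i.
by have := N_P (f M) M (leq_bigmax (F := N) (f M)); rewrite eqxx.
Qed.

Lemma subseq_of_infinitely_often (P : nat -> Prop) :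
  (forall N, exists2 j, (N <= j)%N & P j) ->
  exists js : nat -> nat, {homo js : m n / (m < n)%N} /\ forall k, P (js k).
Proof.
move=> often; have /boolp.choice[next next_P] : forall N, exists j, (N <= j)%N /\ P j.
  by move=> N; have [j] := often N; exists j.
exists (fun k => iter k (fun j => next j.+1) (next 0%N)); split.
  by apply: homo_ltn ltn_trans _ => k; exact: (next_P _).1.
by case=> [|k]; apply: (next_P _).2.
Qed.

Lemma homo_ltn_geq_id (js : nat -> nat) : {homo js : m n / (m < n)%N} ->
  forall k, (k <= js k)%N.
Proof. by move=> js_incr; elim=> // k IHk; exact: leq_ltn_trans IHk (js_incr _ _ _). Qed.

Section LimitSet.
Variables (S : finType) (F : S -> fieldType) (R : realType) (C : fieldType)
  (vC : C -> R) (iota : forall s, {rmorphism F s -> C}).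

Local Notation limit_set := (limit_set vC iota).
Local Notation actS := (actS iota).

Lemma actSM (g h : GL2S F) z : (forall s, h s \in unitmx) ->
  actS (mulS g h) z = actS g (actS h z).
Proof.
move=> h_unit; apply: funext => s.
have actSE (k : GL2S F) w : actS k w s = mobius_mx (map_mx (iota s) (k s)) (w s).
  by rewrite /mobius_mx !mxE.
by rewrite !actSE map_mxM mobius_mxM // map_unitmx h_unit.
Qed.

Definition limit_witness (G : GL2S F -> Prop) (y : S -> option C)
    (gam : nat -> GL2S F) (x : S -> option C) : Prop :=
  [/\ forall j, G (gam j), forall i j, i <> j -> ~ projeq (gam i) (gam j)
    & cvgP1S vC (fun j => actS (gam j) y) x].

Lemma limit_set_sub (G G' : GL2S F -> Prop) : (forall g, G g -> G' g) ->
  forall x, limit_set G x -> limit_set G' x.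
Proof.
move=> GG' x [y [gam [G_gam gam_inj gam_cvg]]].
by exists y, gam; split=> // j; apply/GG'/G_gam.
Qed.

Lemma limit_witness_subseq G y gam x (js : nat -> nat) :
  {homo js : m n / (m < n)%N} -> limit_witness G y gam x ->
  limit_witness G y (gam \o js) x.
Proof.
move=> js_incr [G_gam gam_inj gam_cvg]; split => [k|k l kl|s e e_gt0] /=.
- exact: G_gam.
- by apply: gam_inj => /(incn_inj (leq_mono js_incr)).
- have [N N_P] := gam_cvg s e e_gt0; exists N => k N_k.
  exact/N_P/(leq_trans N_k)/homo_ltn_geq_id.
Qed.

Lemma limit_witness_mulr G H y gam x (h : nat -> GL2S F) (g : GL2S F) :
  (forall s, g s \in unitmx) -> (forall k, H (h k)) ->
  (forall k s, gam k s = h k s *m g s) ->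
  limit_witness G y gam x -> limit_witness H (actS g y) h x.
Proof.
move=> g_unit H_h gamE [_ gam_inj gam_cvg]; split => // [k l kl hkl|].
  apply: (gam_inj k l kl) => s; have [c [c_neq0 hklE]] := hkl s.
  by exists c; rewrite !gamE hklE scalemxAl.
move=> s e e_gt0; have [N N_P] := gam_cvg s e e_gt0; exists N => k N_k.
rewrite -actSM //; have -> : mulS (h k) g = gam k.
  by apply: functional_extensionality_dep => t; rewrite gamE.
exact: N_P.
Qed.

Lemma PGL2S_subgroupI (G G' : GL2S F -> Prop) :
  PGL2S_subgroup G -> PGL2S_subgroup G' -> PGL2S_subgroup (fun g => G g /\ G' g).
Proof.
case=> GU G1 GM GV [_ G'1 G'M G'V]; split.
- by move=> g [/GU].
- by move=> c c_neq0; split; [apply: G1 | apply: G'1].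
- by move=> g h [Gg G'g] [Gh G'h]; split; [apply: GM | apply: G'M].
- by move=> g [Gg G'g]; split; [apply: GV | apply: G'V].
Qed.

Lemma limit_set_finite_index (H G : GL2S F -> Prop) :
  PGL2S_subgroup H -> PGL2S_subgroup G -> (forall g, H g -> G g) ->
  finite_index H G -> limit_set H = limit_set G.
Proof.
case=> HU _ HM HV [GU _ _ GV] HG [n [r cosetP]].
apply: funext => x; apply: propext; split; first exact: limit_set_sub.
case=> y [gam gam_wit]; have [G_gam _ _] := gam_wit.
have /boolp.choice[i_ i_P] j : exists i, H (mulS (invS (r i)) (invS (gam j))).
  exact/cosetP/GV.
have [i /subseq_of_infinitely_often[js [js_incr js_i]]] := infinitely_often_ord i_.
pose a k := mulS (invS (r i)) (invS (gam (js k))).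
have H_a k : H (a k) by rewrite /a -(js_i k); apply: i_P.
have a_gam k s : a k s *m gam (js k) s = invmx (r i s).
  by rewrite /a /mulS /invS -mulmxA mulVmx ?mulmx1 // GU.
(* [a_k^-1 a_0 = g_(j_k) g_(j_0)^-1] *)
exists (actS (gam (js 0%N)) y), (fun k => mulS (invS (a k)) (a 0%N)).
apply: (limit_witness_mulr (GU _ (G_gam _)) _ _ (limit_witness_subseq js_incr gam_wit)).
  by move=> k; apply/HM/H_a/HV/H_a.
by move=> k s; rewrite /mulS /invS -mulmxA a_gam -(a_gam k) mulKmx // HU.
Qed.

End LimitSet.

Theorem lemma2p4 (R : realType) (p : nat) (C : closedFieldType) (vC : C -> R)
  (hC : completed_alg_closure p vC)
  (S : finType) (hS : (0 < #|S|)%N)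
  (F : S -> fieldType) (vF : forall s, F s -> R)
  (hF : forall s, na_local_field p (vF s))
  (hchar : forall s (q : nat), (q \in [pchar F s]) = (q \in [pchar C]))
  (iota : forall s, {rmorphism F s -> C})
  (hiota : forall s, cont_emb (vF s) vC (iota s))
  (G G' : GL2S F -> Prop)
  (hG : PGL2S_subgroup G) (hG' : PGL2S_subgroup G')
  (hcomm : commensurable G G') :
  limit_set vC iota G' = limit_set vC iota G.
Proof.
have GG' := PGL2S_subgroupI hG hG'.
have sub_G g : G g /\ G' g -> G g by case.
have sub_G' g : G g /\ G' g -> G' g by case.
case: hcomm => fi_G fi_G'.
exact: etrans (esym (limit_set_finite_index vC iota GG' hG' sub_G' fi_G'))
  (limit_set_finite_index vC iota GG' hG sub_G fi_G).
Qed.
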